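(* Let $n\ge1$, put $L=2^n$ and $M=2^{n-1}$, and let $g={}_5h_n$. Define the words \begin{align*} {}_6h_{n+1}&=\delta_f(g)\,u\,\overline{\delta_m(g)}\,r\,g\,d\,\overline{\delta_y(g)},\\ {}_7h_{n+1}&=\delta_f(g)\,u\,\overline{\delta_m(g)}\,r\,g\,d\,\delta_a(g),\\ {}_8h_{n+1}&=\overline{\delta_g(g)}\,u\,\overline{\delta_m(g)}\,r\,g\,d\,\delta_a(g),\\ {}_9h_{n+1}&=\overline{\delta_o(g)}\,u\,\delta_g(g)\,r\,\overline{\delta_a(g)}\,d\,\delta_x(g),\\ {}_{10}h_{n+1}&=\delta_m(g)\,u\,\delta_g(g)\,r\,\overline{\delta_a(g)}\,d\,\overline{g},\\ {}_{11}h_{n+1}&=\delta_m(g)\,u\,\delta_g(g)\,r\,\overline{\delta_a(g)}\,d\,\delta_x(g). \end{align*} Then each of these words traces a Hamiltonian path of the grid $\{0,\dots,2L-1\}^2$, with the following endpoints: \begin{enumerate} \item ${}_6h_{n+1}$ goes from $(L-1,M)$ to $(L,M)$; the endpoints are adjacent. \item ${}_7h_{n+1}$ goes from $(L-1,M)$ to $(2L-1,M-1)$. \item ${}_8h_{n+1}$ goes from $(0,M-1)$ to $(2L-1,M-1)$. \item ${}_9h_{n+1}$ goes from $(L-1,M-1)$ to $(L,M-1)$; the endpoints are adjacent. \item ${}_{10}h_{n+1}$ goes from $(0,M)$ to $(2L-1,M)$. \item ${}_{11}h_{n+1}$ goes from $(0,M)$ to $(L,M-1)$. \end{enumerate}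
   Context: Let $\Sigma=\{u,d,r,l\}$, where $u$ = up, $d$ = down, $r$ = right and $l$ = left. Set $v(u)=(0,1)$, $v(d)=(0,-1)$, $v(r)=(1,0)$ and $v(l)=(-1,0)$. For a finite word $w=w_1\cdots w_k$ over $\Sigma$ and a point $p\in\mathbb{Z}^2$, the lattice path encoded by $w$ from $p$ is the sequence $p_0=p$, $p_i=p_{i-1}+v(w_i)$ for $i=1,\dots,k$. For $m\ge 1$, say that $w$ traces a Hamiltonian path of the grid $\{0,\dots,m-1\}^2$ from $a$ to $b$ if the path encoded by $w$ from $a$ satisfies three conditions: the points $p_0,\dots,p_k$ are pairwise distinct; $\{p_0,\dots,p_k\}=\{0,\dots,m-1\}^2$, so that $k=m^2-1$; and $p_k=b$. Grid points represent the $m^2$ equal subsquares of the unit square, and consecutive points are edge-adjacent squares. Juxtaposition denotes concatenation of words. The reversion operation is $\overline{w_1w_2\cdots w_k}=w_k\cdots w_2w_1$: the order of the letters is reversed and no letter is substituted. The following letter-to-letter morphisms of $\Sigma^*$ are applied letterwise: \begin{itemize} \item $\delta_o$: $u\mapsto r$, $r\mapsto u$, $d\mapsto l$, $l\mapsto d$; \item $\delta_a$: $u\mapsto l$, $r\mapsto d$, $d\mapsto r$, $l\mapsto u$; \item $\delta_g$: $u\mapsto l$, $r\mapsto u$, $d\mapsto r$, $l\mapsto d$; \item $\delta_x$: $u\mapsto r$, $r\mapsto d$, $d\mapsto l$, $l\mapsto u$; \item $\delta_f$: $u\mapsto d$, $r\mapsto l$, $d\mapsto u$, $l\mapsto r$;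 \item $\delta_m$: $u\mapsto d$, $r\mapsto r$, $d\mapsto u$, $l\mapsto l$; \item $\delta_y$: $u\mapsto u$, $r\mapsto l$, $d\mapsto d$, $l\mapsto r$. \end{itemize} The Hilbert words are defined recursively by ${}_0h_0=\varepsilon$ (the empty word) and \[ {}_0h_{n+1}=\delta_o({}_0h_n)\,u\,{}_0h_n\,r\,{}_0h_n\,d\,\delta_a({}_0h_n). \] For $n\ge1$, put $h={}_0h_{n-1}$ and define \[ {}_5h_n=\delta_m(h)\,u\,\delta_g(h)\,r\,\delta_x(h)\,d\,\delta_x(h). \] *)

From Stdlib Require Import ZArith List.
Import ListNotations.
Open Scope Z_scope.

Inductive letter : Type := u | d | r | l.

Definition word := list letter.
Definition point := (Z * Z)%type.

Definition v (c : letter) : point :=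
  match c with
  | u => (0, 1) | d => (0, -1) | r => (1, 0) | l => (-1, 0)
  end.

Definition padd (p q : point) : point := (fst p + fst q, snd p + snd q).

Fixpoint lpath (p : point) (w : word) : list point :=
  match w with
  | [] => [p]
  | c :: w' => p :: lpath (padd p (v c)) w'
  end.

Definition in_grid (m : Z) (q : point) : Prop :=
  0 <= fst q <= m - 1 /\ 0 <= snd q <= m - 1.

Definition traces_ham (m : Z) (a b : point) (w : word) : Prop :=
  NoDup (lpath a w) /\
  (forall q, In q (lpath a w) <-> in_grid m q) /\
  last (lpath a w) a = b.

Definition adjacent (p q : point) : Prop :=
  Z.abs (fst p - fst q) + Z.abs (snd p - snd q) = 1.

(* reversion: order of letters reversed, no substitution *)
Definition rev_w (w : word) : word := rev w.

Definition morph (f : letter -> letter) (w : word) : word := map f w.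

Definition delta_o := morph (fun c => match c with u => r | r => u | d => l | l => d end).
Definition delta_a := morph (fun c => match c with u => l | r => d | d => r | l => u end).
Definition delta_g := morph (fun c => match c with u => l | r => u | d => r | l => d end).
Definition delta_x := morph (fun c => match c with u => r | r => d | d => l | l => u end).
Definition delta_f := morph (fun c => match c with u => d | r => l | d => u | l => r end).
Definition delta_m := morph (fun c => match c with u => d | r => r | d => u | l => l end).
Definition delta_y := morph (fun c => match c with u => u | r => l | d => d | l => r end).

Fixpoint h0 (n : nat) : word :=
  match n with
  | O => []
  | S k => let h := h0 k in
           delta_o h ++ [u] ++ h ++ [r] ++ h ++ [d] ++ delta_a h
  end.

(* 5h_n (meaningful for n >= 1), with h = 0h_{n-1} *)
Definition h5 (n : nat) : word :=
  let h := h0 (n - 1) in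
  delta_m h ++ [u] ++ delta_g h ++ [r] ++ delta_x h ++ [d] ++ delta_x h.

Definition h6 (n : nat) : word := let g := h5 n in
  delta_f g ++ [u] ++ rev_w (delta_m g) ++ [r] ++ g ++ [d] ++ rev_w (delta_y g).
Definition h7 (n : nat) : word := let g := h5 n in
  delta_f g ++ [u] ++ rev_w (delta_m g) ++ [r] ++ g ++ [d] ++ delta_a g.
Definition h8 (n : nat) : word := let g := h5 n in
  rev_w (delta_g g) ++ [u] ++ rev_w (delta_m g) ++ [r] ++ g ++ [d] ++ delta_a g.
Definition h9 (n : nat) : word := let g := h5 n in
  rev_w (delta_o g) ++ [u] ++ delta_g g ++ [r] ++ rev_w (delta_a g) ++ [d] ++ delta_x g.
Definition h10 (n : nat) : word := let g := h5 n in
  delta_m g ++ [u] ++ delta_g g ++ [r] ++ rev_w (delta_a g) ++ [d] ++ rev_w g.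
Definition h11 (n : nat) : word := let g := h5 n in
  delta_m g ++ [u] ++ delta_g g ++ [r] ++ rev_w (delta_a g) ++ [d] ++ delta_x g.

From Stdlib Require Import ZArith List Lia FinFun.
Import ListNotations.
Open Scope Z_scope.

(* Each word of the theorem is four smaller words joined by three
   single steps, and each smaller word is an image of g = 5h_n under a letter
   morphism and/or reversion.  A letter morphism moves a lattice path by an
   isometry of Z^2 (a rotation or reflection), reversion runs the path backwards
   (a point reflection once letters are kept), and the endpoint is tracked
   explicitly.  So we work with "w traces a Hamiltonian path of the region S from
   a to b" for an arbitrary region S, show that this notion is transported by
   compatible isometries, by reversion and by translation, and that paths of
   four pairwise disjoint regions glue along connecting letters to a path of
   their union.  Induction then gives that 0h_k covers the 2^k-square from
   (0,0) to (2^k-1,0); one more gluing step gives 5h_n on the 2M-square from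
   (0,M-1) to (M,0) (M = 2^(n-1)); and six gluing steps, each placing four
   transformed copies of g on the quadrants of the 4M-square, give the six
   claims of the theorem. *)

Fixpoint endp (p : point) (w : word) : point :=
  match w with [] => p | c :: w' => endp (padd p (v c)) w' end.

Definition ham (S : point -> Prop) (a b : point) (w : word) : Prop :=
  NoDup (lpath a w) /\ (forall q, In q (lpath a w) <-> S q) /\ endp a w = b.

Definition box (x0 y0 sx sy : Z) (q : point) : Prop :=
  x0 <= fst q < x0 + sx /\ y0 <= snd q < y0 + sy.

Lemma last_lpath w : forall p x, last (lpath p w) x = endp p w.
Proof.
  induction w as [|c w IH]; intros p x; [reflexivity|].
  cbn [lpath endp]. rewrite <- (IH _ x). destruct w; reflexivity.
Qed.

Lemma traces_of_ham m a b w : ham (box 0 0 m m) a b w -> traces_ham m a b w.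
Proof.
  intros [Hnodup [Hcover Hend]]. split; [|split]; auto.
  - intros q; rewrite Hcover; unfold box, in_grid; destruct q; simpl; lia.
  - now rewrite last_lpath.
Qed.

Lemma lpath_app w1 : forall p c w2,
  lpath p (w1 ++ c :: w2) = lpath p w1 ++ lpath (padd (endp p w1) (v c)) w2.
Proof. induction w1 as [|c' w IH]; intros; simpl; [reflexivity|]. now rewrite IH. Qed.

Lemma endp_app w1 : forall p w2, endp p (w1 ++ w2) = endp (endp p w1) w2.
Proof. induction w1; intros; simpl; auto. Qed.

Lemma ham_ext S S' a b w : (forall q, S q <-> S' q) -> ham S a b w -> ham S' a b w.
Proof.
  intros E [Hnodup [Hcover Hend]]; split; [|split]; auto.
  intros q; rewrite Hcover; apply E.
Qed.

Section Transport.
Variables (f : letter -> letter) (T Ti : point -> point).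
Hypothesis T_step : forall q c, T (padd q (v c)) = padd (T q) (v (f c)).
Hypotheses (TiT : forall q, Ti (T q) = q) (TTi : forall q, T (Ti q) = q).

Lemma lpath_map w : forall p, lpath (T p) (map f w) = map T (lpath p w).
Proof. induction w; intros p; simpl; [reflexivity|]. now rewrite <- T_step, IHw. Qed.

Lemma endp_map w : forall p, endp (T p) (map f w) = T (endp p w).
Proof. induction w; intros p; simpl; [reflexivity|]. now rewrite <- T_step, IHw. Qed.

Lemma ham_morph S a b w :
  ham S a b w -> ham (fun q => S (Ti q)) (T a) (T b) (map f w).
Proof.
  intros [Hnodup [Hcover Hend]]. split; [|split].
  - rewrite lpath_map. apply Injective_map_NoDup; auto.
    intros x y E. rewrite <- (TiT x), <- (TiT y), E. reflexivity.
  - intros q. rewrite lpath_map, in_map_iff, <- Hcover. split.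
    + intros [x [<- Hx]]. now rewrite TiT.
    + intros Hq. exists (Ti q). auto.
  - rewrite endp_map. now f_equal.
Qed.
End Transport.

Lemma ham_trans t S a b w : ham S a b w ->
  ham (fun q => S (fst q - fst t, snd q - snd t)) (padd a t) (padd b t) w.
Proof.
  intros H. rewrite <- (map_id w).
  apply (ham_morph (fun c => c) (fun q => padd q t)
           (fun q => (fst q - fst t, snd q - snd t))); [intros [x y] c|intros [x y]..|exact H];
    unfold padd; simpl; f_equal; lia.
Qed.

Definition neg (c : letter) : letter :=
  match c with u => d | d => u | r => l | l => r end.

Lemma padd_neg p c : padd (padd p (v c)) (v (neg c)) = p.
Proof. destruct p as [x y]; destruct c; unfold padd; simpl; f_equal; lia. Qed.

Lemma endp_revneg w : forall p, endp (endp p w) (map neg (rev w)) = p.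
Proof.
  induction w as [|c w IH]; intros p; [reflexivity|].
  simpl. rewrite map_app, endp_app, IH. simpl. apply padd_neg.
Qed.

Lemma lpath_revneg w : forall p, lpath (endp p w) (map neg (rev w)) = rev (lpath p w).
Proof.
  induction w as [|c w IH]; intros p; [reflexivity|].
  simpl. rewrite map_app. simpl. rewrite lpath_app, IH, endp_revneg, padd_neg.
  reflexivity.
Qed.

Lemma ham_revneg S a b w : ham S a b w -> ham S b a (map neg (rev w)).
Proof.
  intros [Hnodup [Hcover Hend]]. subst b. split; [|split].
  - rewrite lpath_revneg. now apply NoDup_rev.
  - intros q. rewrite lpath_revneg, <- in_rev. apply Hcover.
  - apply endp_revneg.
Qed.

(* Reversion (letters kept): composing the backward run with the point
   reflection q |-> c - q, which negates every step, restores the letters. *)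
Definition psub (c q : point) : point := (fst c - fst q, snd c - snd q).

Lemma ham_rev c S a b w : ham S a b w ->
  ham (fun q => S (psub c q)) (psub c b) (psub c a) (rev_w w).
Proof.
  intros H. apply ham_revneg, (ham_morph neg (psub c) (psub c)) in H.
  - rewrite map_map, (map_ext _ (fun c => c)), map_id in H; [exact H|].
    intros []; reflexivity.
  - intros [x y] []; unfold psub, padd; simpl; f_equal; lia.
  - intros [x y]; unfold psub; simpl; f_equal; lia.
  - intros [x y]; unfold psub; simpl; f_equal; lia.
Qed.

Lemma ham_app S1 S2 a b1 b c w1 w2 : ham S1 a b1 w1 -> ham S2 (padd b1 (v c)) b w2 ->
  (forall q, S1 q -> S2 q -> False) ->
  ham (fun q => S1 q \/ S2 q) a b (w1 ++ c :: w2).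
Proof.
  intros [H1 [H2 H3]] [G1 [G2 G3]] Hdisj. subst b1. split; [|split].
  - rewrite lpath_app. apply NoDup_app; auto.
    intros q Hq Hq'. apply (Hdisj q); [apply H2|apply G2]; auto.
  - intros q. rewrite lpath_app, in_app_iff, H2, G2. tauto.
  - rewrite endp_app. exact G3.
Qed.

Lemma ham_glue4 S S1 S2 S3 S4 a b a1 b1 a2 b2 a3 b3 a4 b4 c1 c2 c3 w1 w2 w3 w4 :
  ham S1 a1 b1 w1 -> ham S2 a2 b2 w2 -> ham S3 a3 b3 w3 -> ham S4 a4 b4 w4 ->
  a1 = a -> a2 = padd b1 (v c1) -> a3 = padd b2 (v c2) -> a4 = padd b3 (v c3) -> b4 = b ->
  (forall q, S1 q -> S2 q -> False) -> (forall q, S1 q -> S3 q -> False) ->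
  (forall q, S1 q -> S4 q -> False) -> (forall q, S2 q -> S3 q -> False) ->
  (forall q, S2 q -> S4 q -> False) -> (forall q, S3 q -> S4 q -> False) ->
  (forall q, S q <-> S1 q \/ S2 q \/ S3 q \/ S4 q) ->
  ham S a b (w1 ++ [c1] ++ w2 ++ [c2] ++ w3 ++ [c3] ++ w4).
Proof.
  intros P1 P2 P3 P4 E1 E2 E3 E4 E5 D12 D13 D14 D23 D24 D34 Hcover. subst.
  eapply ham_ext; [intros q; symmetry; apply Hcover|]. simpl.
  apply (ham_app _ _ _ b1); [|apply (ham_app _ _ _ b2); [|apply (ham_app _ _ _ b3)|]|];
    auto; intros q H; intuition eauto.
Qed.

(* Places one transformed copy: [T] is an isometry with inverse [Ti] that is
   compatible with the letter morphism being applied. *)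
Ltac transport T Ti H :=
  apply (ham_morph _ T Ti);
  [ intros [x y] []; unfold padd; simpl; f_equal; lia
  | intros [x y]; simpl; f_equal; lia
  | intros [x y]; simpl; f_equal; lia
  | exact H ].

(* Remaining obligations of [ham_glue4]: endpoint equations, disjointness and
   covering of the quadrants, all linear arithmetic on coordinates. *)
Ltac solve_glue_side :=
  first [ reflexivity
        | unfold padd, psub; cbn [fst snd v]; f_equal; lia
        | intros [x y]; unfold box, psub; cbv beta; cbn [fst snd]; lia ].

Lemma h0_step s h : s > 0 -> ham (box 0 0 s s) (0,0) (s-1,0) h ->
  ham (box 0 0 (2*s) (2*s)) (0,0) (2*s-1,0)
   (delta_o h ++ [u] ++ h ++ [r] ++ h ++ [d] ++ delta_a h).
Proof.
  intros Hs IH. unfold delta_o, delta_a, morph.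
  eapply ham_glue4;
  [ transport (fun q : point => (snd q, fst q)) (fun q : point => (snd q, fst q)) IH
  | apply (ham_trans (0, s)); exact IH
  | apply (ham_trans (s, s)); exact IH
  | transport (fun q : point => (2*s-1-snd q, s-1-fst q))
              (fun q : point => (s-1-snd q, 2*s-1-fst q)) IH
  | .. ]; solve_glue_side.
Qed.

Lemma h0_ham k :
  ham (box 0 0 (2^Z.of_nat k) (2^Z.of_nat k)) (0,0) (2^Z.of_nat k - 1, 0) (h0 k).
Proof.
  induction k as [|k IH].
  - split; [|split].
    + constructor; [intros []|constructor].
    + intros [x y]; unfold box; simpl; split.
      * intros [E|[]]; inversion E; lia.
      * intros H; left; f_equal; lia.
    + reflexivity.
  - assert (2 ^ Z.of_nat k > 0) by (apply Z.lt_gt, Z.pow_pos_nonneg; lia).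
    rewrite Nat2Z.inj_succ, Z.pow_succ_r by lia.
    apply h0_step; auto.
Qed.

Lemma h5_step s h : s > 0 -> ham (box 0 0 s s) (0,0) (s-1,0) h ->
  ham (box 0 0 (2*s) (2*s)) (0,s-1) (s,0)
   (delta_m h ++ [u] ++ delta_g h ++ [r] ++ delta_x h ++ [d] ++ delta_x h).
Proof.
  intros Hs IH. unfold delta_m, delta_g, delta_x, morph.
  eapply ham_glue4;
  [ transport (fun q : point => (fst q, s-1-snd q)) (fun q : point => (fst q, s-1-snd q)) IH
  | transport (fun q : point => (s-1-snd q, s+fst q)) (fun q : point => (snd q-s, s-1-fst q)) IH
  | transport (fun q : point => (s+snd q, 2*s-1-fst q))
              (fun q : point => (2*s-1-snd q, fst q-s)) IH
  | transport (fun q : point => (s+snd q, s-1-fst q)) (fun q : point => (s-1-snd q, fst q-s)) IH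
  | .. ]; solve_glue_side.
Qed.

Lemma h5_ham k :
  ham (box 0 0 (2 * 2^Z.of_nat k) (2 * 2^Z.of_nat k))
      (0, 2^Z.of_nat k - 1) (2^Z.of_nat k, 0) (h5 (S k)).
Proof.
  unfold h5. replace (S k - 1)%nat with k by lia.
  apply h5_step; [apply Z.lt_gt, Z.pow_pos_nonneg; lia | apply h0_ham].
Qed.

(* Each proof places the four copies of g on the quadrants
   [0,2M)x[0,2M), [0,2M)x[2M,4M), [2M,4M)x[2M,4M), [2M,4M)x[0,2M) in order. *)
Section Quadrants.
Variables (M : Z) (g : word).
Hypothesis M_pos : M > 0.
Hypothesis g_ham : ham (box 0 0 (2*M) (2*M)) (0,M-1) (M,0) g.

Lemma h6_ham : ham (box 0 0 (2*(2*M)) (2*(2*M))) (2*M-1, M) (2*M, M)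
  (delta_f g ++ [u] ++ rev_w (delta_m g) ++ [r] ++ g ++ [d] ++ rev_w (delta_y g)).
Proof.
  unfold delta_f, delta_m, delta_y, morph.
  eapply ham_glue4;
  [ transport (fun q : point => (2*M-1-fst q, 2*M-1-snd q))
              (fun q : point => (2*M-1-fst q, 2*M-1-snd q)) g_ham
  | apply (ham_rev (2*M-1, 2*M));
    transport (fun q : point => (fst q, - snd q)) (fun q : point => (fst q, - snd q)) g_ham
  | apply (ham_trans (2*M, 2*M)); exact g_ham
  | apply (ham_rev (2*M, 2*M-1));
    transport (fun q : point => (- fst q, snd q)) (fun q : point => (- fst q, snd q)) g_ham
  | .. ]; solve_glue_side.
Qed.

Lemma h7_ham : ham (box 0 0 (2*(2*M)) (2*(2*M))) (2*M-1, M) (2*(2*M)-1, M-1)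
  (delta_f g ++ [u] ++ rev_w (delta_m g) ++ [r] ++ g ++ [d] ++ delta_a g).
Proof.
  unfold delta_f, delta_m, delta_a, morph.
  eapply ham_glue4;
  [ transport (fun q : point => (2*M-1-fst q, 2*M-1-snd q))
              (fun q : point => (2*M-1-fst q, 2*M-1-snd q)) g_ham
  | apply (ham_rev (2*M-1, 2*M));
    transport (fun q : point => (fst q, - snd q)) (fun q : point => (fst q, - snd q)) g_ham
  | apply (ham_trans (2*M, 2*M)); exact g_ham
  | transport (fun q : point => (4*M-1-snd q, 2*M-1-fst q))
              (fun q : point => (2*M-1-snd q, 4*M-1-fst q)) g_ham
  | .. ]; solve_glue_side.
Qed.

Lemma h8_ham : ham (box 0 0 (2*(2*M)) (2*(2*M))) (0, M-1) (2*(2*M)-1, M-1)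
  (rev_w (delta_g g) ++ [u] ++ rev_w (delta_m g) ++ [r] ++ g ++ [d] ++ delta_a g).
Proof.
  unfold delta_g, delta_m, delta_a, morph.
  eapply ham_glue4;
  [ apply (ham_rev (0, 2*M-1));
    transport (fun q : point => (- snd q, fst q)) (fun q : point => (snd q, - fst q)) g_ham
  | apply (ham_rev (2*M-1, 2*M));
    transport (fun q : point => (fst q, - snd q)) (fun q : point => (fst q, - snd q)) g_ham
  | apply (ham_trans (2*M, 2*M)); exact g_ham
  | transport (fun q : point => (4*M-1-snd q, 2*M-1-fst q))
              (fun q : point => (2*M-1-snd q, 4*M-1-fst q)) g_ham
  | .. ]; solve_glue_side.
Qed.

Lemma h9_ham : ham (box 0 0 (2*(2*M)) (2*(2*M))) (2*M-1, M-1) (2*M, M-1)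
  (rev_w (delta_o g) ++ [u] ++ delta_g g ++ [r] ++ rev_w (delta_a g) ++ [d] ++ delta_x g).
Proof.
  unfold delta_o, delta_g, delta_a, delta_x, morph.
  eapply ham_glue4;
  [ apply (ham_rev (2*M-1, 2*M-1));
    transport (fun q : point => (snd q, fst q)) (fun q : point => (snd q, fst q)) g_ham
  | transport (fun q : point => (2*M-1-snd q, 2*M+fst q))
              (fun q : point => (snd q-2*M, 2*M-1-fst q)) g_ham
  | apply (ham_rev (2*M, 2*M));
    transport (fun q : point => (- snd q, - fst q)) (fun q : point => (- snd q, - fst q)) g_ham
  | transport (fun q : point => (2*M+snd q, 2*M-1-fst q))
              (fun q : point => (2*M-1-snd q, fst q-2*M)) g_ham
  | .. ]; solve_glue_side.
Qed.

Lemma h10_ham : ham (box 0 0 (2*(2*M)) (2*(2*M))) (0, M) (2*(2*M)-1, M)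
  (delta_m g ++ [u] ++ delta_g g ++ [r] ++ rev_w (delta_a g) ++ [d] ++ rev_w g).
Proof.
  unfold delta_m, delta_g, delta_a, morph.
  eapply ham_glue4;
  [ transport (fun q : point => (fst q, 2*M-1-snd q))
              (fun q : point => (fst q, 2*M-1-snd q)) g_ham
  | transport (fun q : point => (2*M-1-snd q, 2*M+fst q))
              (fun q : point => (snd q-2*M, 2*M-1-fst q)) g_ham
  | apply (ham_rev (2*M, 2*M));
    transport (fun q : point => (- snd q, - fst q)) (fun q : point => (- snd q, - fst q)) g_ham
  | apply (ham_rev (4*M-1, 2*M-1)); exact g_ham
  | .. ]; solve_glue_side.
Qed.

Lemma h11_ham : ham (box 0 0 (2*(2*M)) (2*(2*M))) (0, M) (2*M, M-1)
  (delta_m g ++ [u] ++ delta_g g ++ [r] ++ rev_w (delta_a g) ++ [d] ++ delta_x g).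
Proof.
  unfold delta_m, delta_g, delta_a, delta_x, morph.
  eapply ham_glue4;
  [ transport (fun q : point => (fst q, 2*M-1-snd q))
              (fun q : point => (fst q, 2*M-1-snd q)) g_ham
  | transport (fun q : point => (2*M-1-snd q, 2*M+fst q))
              (fun q : point => (snd q-2*M, 2*M-1-fst q)) g_ham
  | apply (ham_rev (2*M, 2*M));
    transport (fun q : point => (- snd q, - fst q)) (fun q : point => (- snd q, - fst q)) g_ham
  | transport (fun q : point => (2*M+snd q, 2*M-1-fst q))
              (fun q : point => (2*M-1-snd q, fst q-2*M)) g_ham
  | .. ]; solve_glue_side.
Qed.
End Quadrants.

Theorem mainTheorem2 (n : nat) (Hn : (1 <= n)%nat) :
  let L := 2 ^ Z.of_nat n in
  let M := 2 ^ (Z.of_nat n - 1) in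
  (traces_ham (2 * L) (L - 1, M) (L, M) (h6 n) /\ adjacent (L - 1, M) (L, M)) /\
  traces_ham (2 * L) (L - 1, M) (2 * L - 1, M - 1) (h7 n) /\
  traces_ham (2 * L) (0, M - 1) (2 * L - 1, M - 1) (h8 n) /\
  (traces_ham (2 * L) (L - 1, M - 1) (L, M - 1) (h9 n) /\ adjacent (L - 1, M - 1) (L, M - 1)) /\
  traces_ham (2 * L) (0, M) (2 * L - 1, M) (h10 n) /\
  traces_ham (2 * L) (0, M) (L, M - 1) (h11 n).
Proof.
  destruct n as [|k]; [lia|]. cbv zeta.
  (* L = 2M with M = 2^k *)
  replace (Z.of_nat (S k) - 1) with (Z.of_nat k) by lia.
  rewrite Nat2Z.inj_succ, Z.pow_succ_r by lia.
  assert (M_pos : 2^Z.of_nat k > 0) by (apply Z.lt_gt, Z.pow_pos_nonneg; lia).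
  pose proof (h5_ham k) as g_ham.
  unfold h6, h7, h8, h9, h10, h11.
  set (M := 2^Z.of_nat k) in *. clearbody M.
  split; [split|split; [|split; [|split; [split|split]]]];
    try (unfold adjacent; simpl; lia); apply traces_of_ham.
  - now apply h6_ham.
  - now apply h7_ham.
  - now apply h8_ham.
  - now apply h9_ham.
  - now apply h10_ham.
  - now apply h11_ham.
Qed.
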